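(* Let $p$ be a positive integer, let $1 \le r_1 \le \dots \le r_p$ be integers with $r_d \mid r_{d+1}$ for $d=1,\dots,p-1$, and let $\alpha \ge r_p$ be an integer. Then the edge-coloring $\psi_p$ of the complete graph on vertex set $\{0,1\}^\alpha$ defined below contains no striped $K_4$.
   Context: Set $r_0 = 1$ and $r_{p+1} = \alpha$. For $0 \le d \le p$ and a binary string $x$ of any length, write $x = (x^{(d)}_1, \dots, x^{(d)}_{m})$ for its decomposition into consecutive blocks, each of length $r_d$ except the last, which has length between $1$ and $r_d$. Define $\eta_d(x,y) = 0$ if $x=y$ and otherwise $\eta_d(x,y) = (i,\{x^{(d)}_i,y^{(d)}_i\})$ with $i$ the least index where $x^{(d)}_i \ne y^{(d)}_i$. For $x,y \in\{0,1\}^\alpha$ and $0\le d\le p$, decomposing $x,y$ into blocks of length $r_{d+1}$, $x=(x^{(d+1)}_1,\dots,x^{(d+1)}_{m'})$, set $\xi_d(x,y) = (\eta_d(x^{(d+1)}_1,y^{(d+1)}_1),\dots,\eta_d(x^{(d+1)}_{m'},y^{(d+1)}_{m'}))$ and $c_p(x,y) = (\xi_p(x,y),\dots,\xi_0(x,y))$. Order binary strings of each fixed length lexicographically. For $x<y$ in $\{0,1\}^\alpha$, with $x = (x^{(p)}_1,\dots,x^{(p)}_{a+1})$ the decomposition into blocks of length $r_p$, let $\delta_{p,i}(x,y) = +1$ if $x^{(p)}_i \le y^{(p)}_i$ and $-1$ if $x^{(p)}_i > y^{(p)}_i$, and $\Delta_p(x,y) = (\delta_{p,1}(x,y),\dots,\delta_{p,a+1}(x,y))$.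 Then $\psi_p$ assigns to the edge $\{x,y\}$, $x<y$, the color $(c_p(x,y), \Delta_p(x,y))$. A striped $K_4$ under an edge-coloring $f$ is a set of four vertices $\{a,b,c,e\}$ with $f(ab)=f(ce)$, $f(ac)=f(be)$, $f(ae)=f(bc)$, and $f(ab)$, $f(ac)$, $f(ae)$ pairwise distinct. *)

From HB Require Import structures.
From mathcomp Require Import all_boot.
From mathcomp Require Import finmap.
Set Implicit Arguments. Unset Strict Implicit. Unset Printing Implicit Defensive.

Local Open Scope fset_scope.

(* Binary strings are [seq bool] (false = 0, true = 1). *)

Fixpoint lexle (s t : seq bool) : bool :=
  match s, t with
  | [::], _ => true
  | _ :: _, [::] => false
  | a :: s', b :: t' => (~~ a && b) || ((a == b) && lexle s' t')
  end.
Definition lexlt (s t : seq bool) : bool := lexle s t && (s != t).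

(* Decomposition of s into consecutive blocks of length k (k >= 1), the last
   one of length between 1 and k. *)
Definition blocks (k : nat) (s : seq bool) : seq (seq bool) :=
  [seq take k (drop (k * i) s) | i <- iota 0 ((size s + k.-1) %/ k)].

Definition rseq (p alpha : nat) (r : nat -> nat) (d : nat) : nat :=
  if d == 0 then 1 else if d == p.+1 then alpha else r d.

(* eta_d : None encodes the value 0; Some (i, {x_i, y_i}) with i 1-based. *)
Definition eta_col := option (nat * {fset (seq bool)}).

Definition eta (k : nat) (x y : seq bool) : eta_col :=
  if x == y then None
  else
    let bx := blocks k x in
    let by_ := blocks k y in
    let i := find (fun uv : seq bool * seq bool => uv.1 != uv.2) (zip bx by_) in
    Some (i.+1, [fset nth [::] bx i; nth [::] by_ i]).

Definition xi (p alpha : nat) (r : nat -> nat) (d : nat) (x y : seq bool)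
  : seq eta_col :=
  [seq eta (rseq p alpha r d) uv.1 uv.2
  | uv <- zip (blocks (rseq p alpha r d.+1) x) (blocks (rseq p alpha r d.+1) y)].

Definition cp (p alpha : nat) (r : nat -> nat) (x y : seq bool) : seq (seq eta_col) :=
  [seq xi p alpha r d x y | d <- rev (iota 0 p.+1)].

(* Delta_p; the sign +1 is encoded by true and -1 by false. *)
Definition Deltap (p alpha : nat) (r : nat -> nat) (x y : seq bool) : seq bool :=
  [seq lexle uv.1 uv.2
  | uv <- zip (blocks (rseq p alpha r p) x) (blocks (rseq p alpha r p) y)].

Definition psi_col := (seq (seq eta_col) * seq bool)%type.

Definition psi_ord (p alpha : nat) (r : nat -> nat) (x y : seq bool) : psi_col :=
  (cp p alpha r x y, Deltap p alpha r x y).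

Definition psi (p alpha : nat) (r : nat -> nat) (x y : alpha.-tuple bool) : psi_col :=
  if lexlt x y then psi_ord p alpha r x y else psi_ord p alpha r y x.

Definition striped_K4 (T : eqType) (C : eqType) (f : T -> T -> C) (a b c e : T) : Prop :=
  [/\ uniq [:: a; b; c; e],
      f a b = f c e, f a c = f b e, f a e = f b c &
      [/\ f a b != f a c, f a b != f a e & f a c != f a e]].

(* Only the top level of psi_p matters.  Since r_(p+1) = alpha, xi_p(x,y) is
   the single entry eta_p(x,y) = (i, {x_i, y_i}), where i is the first block of
   length r_p in which x and y differ.  Being striped is invariant under
   permuting the four vertices, so sort them as a < b < c < e.  Then
   psi(ab) = psi(ce) forces the same index i and {a_i, b_i} = {c_i, e_i}, so
   either a_i = c_i, b_i = e_i or a_i = e_i, b_i = c_i.  In the first case the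
   i-th sign of Delta_p on ae and on bc compares a_i with b_i and b_i with a_i;
   in the second case the same happens for ac and be.  As a_i <> b_i these
   signs differ, contradicting psi(ae) = psi(bc), resp. psi(ac) = psi(be). *)
From mathcomp Require Import all_boot.
From mathcomp Require Import finmap.
From mathcomp Require Import zify.
Set Implicit Arguments. Unset Strict Implicit. Unset Printing Implicit Defensive.

Lemma lexle_anti s t : lexle s t -> lexle t s -> s = t.
Proof.
elim: s t => [|x s IH] [|y t] //=.
by case: x; case: y => //= st ts; rewrite (IH t st ts).
Qed.

Lemma lexle_total s t : lexle s t || lexle t s.
Proof. by elim: s t => [|x s IH] [|y t] //=; case: x; case: y => //=; apply: IH. Qed.

Lemma lexle_trans s t u : lexle s t -> lexle t u -> lexle s u.
Proof.
elim: s t u => [|x s IH] [|y t] [|z u] //=.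
by case: x; case: y; case: z => //=; apply: IH.
Qed.

Lemma lexlt_neq s t : lexlt s t -> s != t.
Proof. by case/andP. Qed.

Lemma lexlt_total s t : s != t -> lexlt s t || lexlt t s.
Proof. by move=> st; rewrite /lexlt st eq_sym st !andbT lexle_total. Qed.

Lemma lexlt_asym s t : lexlt s t -> ~~ lexlt t s.
Proof.
case/andP=> st /negP st_neq; apply/negP => /andP[ts _].
exact/st_neq/eqP/lexle_anti.
Qed.

Lemma lexlt_trans s t u : lexlt s t -> lexlt t u -> lexlt s u.
Proof.
move=> /andP[st st_neq] /andP[tu _]; rewrite /lexlt (lexle_trans st tu).
apply: contraNN st_neq => /eqP su; rewrite su in st *.
by rewrite (lexle_anti tu st).
Qed.

Lemma lexle_swap_pair (A B C D : seq bool) :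
  A != B -> [fset A; B]%fset = [fset C; D]%fset ->
  lexle A C = lexle B D -> lexle A D = lexle B C -> False.
Proof.
move=> AB ABCD AC_BD AD_BC.
have swapped (X Y : seq bool) : X != Y -> lexle X Y = lexle Y X -> False.
  move=> XY XY_YX; have := lexle_total X Y; rewrite -XY_YX orbb => XleY.
  by move: XY; rewrite (lexle_anti XleY) ?eqxx // -XY_YX.
have /fset2P A_CD : A \in [fset C; D]%fset by rewrite -ABCD fset21.
have /fset2P B_CD : B \in [fset C; D]%fset by rewrite -ABCD fset22.
move: AB AC_BD AD_BC; case: A_CD => ->; case: B_CD => ->; rewrite ?eqxx //.
- by move=> CD _; apply: swapped.
- by move=> DC DC_CD _; apply: swapped DC_CD.
Qed.

Section Blocks.
Variable k : nat.
Hypothesis k_gt0 : 0 < k.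

Local Notation block s i := (nth [::] (blocks k s) i).

Lemma size_blocks s : size (blocks k s) = (size s + k.-1) %/ k.
Proof. by rewrite size_map size_iota. Qed.

Lemma flatten_blocks (s : seq bool) : flatten (blocks k s) = s.
Proof.
have flatten_from m n : size s <= k * (m + n) ->
    flatten [seq take k (drop (k * i) s) | i <- iota m n] = drop (k * m) s.
  elim: n m => [|n IH] m /=; first by rewrite addn0 => /drop_oversize ->.
  by move=> s_le; rewrite IH ?addSnnS // mulnS -drop_drop cat_take_drop.
rewrite flatten_from ?muln0 ?drop0 // add0n.
have := ltn_ceil (size s + k.-1) k_gt0; lia.
Qed.

Lemma blocks_neq (s t : seq bool) : size s = size t -> s != t ->
  has (fun uv : seq bool * seq bool => uv.1 != uv.2) (zip (blocks k s) (blocks k t)).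
Proof.
move=> st_size; apply: contraNT => /hasPn same_blocks; apply/eqP.
rewrite -(flatten_blocks s) -(flatten_blocks t); congr flatten.
apply: (@eq_from_nth _ [::]) => [|i i_lt]; first by rewrite !size_blocks st_size.
have i_lt_zip : i < size (zip (blocks k s) (blocks k t)).
  by rewrite size_zip !size_blocks st_size minnn -st_size -size_blocks.
have /negPn/eqP := same_blocks _ (mem_nth ([::], [::]) i_lt_zip).
by rewrite nth_zip // !size_blocks st_size.
Qed.

Lemma eta_first_diff (s t : seq bool) : size s = size t -> s != t ->
  exists2 i, i < size (blocks k s) &
    block s i != block t i /\ eta k s t = Some (i.+1, [fset block s i; block t i]%fset).
Proof.
move=> st_size st; have st_blocks := blocks_neq st_size st.
have st_blocks_size : size (blocks k s) = size (blocks k t).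
  by rewrite !size_blocks st_size.
pose differ := fun uv : seq bool * seq bool => uv.1 != uv.2.
exists (find differ (zip (blocks k s) (blocks k t))).
  by move: st_blocks; rewrite has_find size_zip -st_blocks_size minnn.
split; last by rewrite /eta (negbTE st).
by have := nth_find ([::], [::]) st_blocks; rewrite nth_zip.
Qed.

End Blocks.

Lemma blocks_self (s : seq bool) : 0 < size s -> blocks (size s) s = [:: s].
Proof.
move=> s_gt0; rewrite /blocks.
have -> : (size s + (size s).-1) %/ size s = 1.
  by rewrite -{1}(mul1n (size s)) divnMDl // divn_small ?ltn_predL.
by rewrite /= muln0 drop0 take_size.
Qed.

Section TopLevel.
Variables (p alpha : nat) (r : nat -> nat).
Hypothesis alpha_gt0 : 0 < alpha.
Hypothesis k_gt0 : 0 < rseq p alpha r p.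

Local Notation k := (rseq p alpha r p).
Local Notation block s i := (nth [::] (blocks k s) i).

Lemma head_cp (x y : seq bool) : head [::] (cp p alpha r x y) = xi p alpha r p x y.
Proof. by rewrite /cp -addn1 iotaD rev_cat. Qed.

Lemma xi_top (x y : seq bool) : size x = alpha -> size y = alpha ->
  xi p alpha r p x y = [:: eta k x y].
Proof.
move=> x_size y_size; rewrite /xi.
have -> : rseq p alpha r p.+1 = alpha by rewrite /rseq eqxx.
have blocks_alpha z : size z = alpha -> blocks alpha z = [:: z].
  by move=> z_size; rewrite -z_size blocks_self // z_size.
by rewrite !blocks_alpha.
Qed.

Lemma psi_ord_eta (x y z w : seq bool) :
  size x = alpha -> size y = alpha -> size z = alpha -> size w = alpha ->
  psi_ord p alpha r x y = psi_ord p alpha r z w -> eta k x y = eta k z w.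
Proof.
move=> x_size y_size z_size w_size [/(congr1 (head [::]))].
by rewrite !head_cp !xi_top // => -[].
Qed.

Lemma nth_Deltap (x y : seq bool) i : size x = size y -> i < size (blocks k x) ->
  nth true (Deltap p alpha r x y) i = lexle (block x i) (block y i).
Proof.
move=> xy_size i_lt; have same_size : size (blocks k x) = size (blocks k y).
  by rewrite !size_blocks xy_size.
by rewrite (nth_map ([::], [::])) ?nth_zip // size_zip -same_size minnn.
Qed.

Lemma psi_ord_Deltap (x y z w : seq bool) i :
  size x = alpha -> size y = alpha -> size z = alpha -> size w = alpha ->
  i < size (blocks k x) ->
  psi_ord p alpha r x y = psi_ord p alpha r z w ->
  lexle (block x i) (block y i) = lexle (block z i) (block w i).
Proof.
move=> x_size y_size z_size w_size i_lt [_ /(congr1 (nth true ^~ i))].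
have i_lt_z : i < size (blocks k z) by move: i_lt; rewrite !size_blocks x_size z_size.
by rewrite !nth_Deltap ?x_size ?y_size ?z_size.
Qed.

Lemma no_striped_K4_chain (a b c e : alpha.-tuple bool) :
  lexlt a b -> lexlt b c -> lexlt c e -> ~ striped_K4 (psi p r) a b c e.
Proof.
move=> ab bc ce [_ ab_ce ac_be ae_bc _].
have ac := lexlt_trans ab bc; have be := lexlt_trans bc ce.
have ae := lexlt_trans ac ce.
rewrite /psi ab ac ae bc be ce in ab_ce ac_be ae_bc.
have size_alpha (x : alpha.-tuple bool) : size x = alpha by apply: size_tuple.
have size_eq (x y : alpha.-tuple bool) : size x = size y by rewrite !size_alpha.
have [i i_lt [AB eta_ab]] := eta_first_diff k_gt0 (size_eq a b) (lexlt_neq ab).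
have [j _ [_ eta_ce]] := eta_first_diff k_gt0 (size_eq c e) (lexlt_neq ce).
have := psi_ord_eta (size_alpha a) (size_alpha b) (size_alpha c) (size_alpha e) ab_ce.
rewrite eta_ab eta_ce => -[<-] ABCD.
by apply: (lexle_swap_pair AB ABCD); apply: psi_ord_Deltap i_lt _.
Qed.

End TopLevel.

Section StripedK4.
Variables (T C : eqType) (f : T -> T -> C).
Hypothesis fC : forall x y, f x y = f y x.

Lemma striped_K4_neq a b c e :
  striped_K4 f a b c e -> [/\ a != b, a != c, b != c, b != e & c != e].
Proof.
by case; rewrite /= !inE !negb_or => /and4P[/and3P[-> -> _] /andP[-> ->] -> _].
Qed.

Lemma striped_K4_swap12 a b c e : striped_K4 f a b c e -> striped_K4 f b a c e.
Proof.
case=> uniq_abce ab_ce ac_be ae_bc [ab_ac ab_ae ac_ae]; split.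
- by rewrite -(perm_uniq (permEl (perm_catCA [:: a] [:: b] [:: c; e]))).
- by rewrite fC.
- by rewrite ae_bc.
- by rewrite ac_be.
- by rewrite (fC b a) -ae_bc -ac_be ab_ae ab_ac eq_sym ac_ae.
Qed.

Lemma striped_K4_swap_pairs a b c e : striped_K4 f a b c e -> striped_K4 f c e a b.
Proof.
case=> uniq_abce ab_ce ac_be ae_bc [ab_ac ab_ae ac_ae]; split.
- by rewrite -(perm_uniq (permEl (perm_catC [:: a; b] [:: c; e]))).
- by rewrite ab_ce.
- by rewrite fC ac_be fC.
- by rewrite fC -ae_bc fC.
- by rewrite -ab_ce (fC c a) (fC c b) -ae_bc ab_ac ab_ae ac_ae.
Qed.

Lemma striped_K4_swap23 a b c e : striped_K4 f a b c e -> striped_K4 f a c b e.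
Proof.
case=> uniq_abce ab_ce ac_be ae_bc [ab_ac ab_ae ac_ae]; split => //.
- rewrite -(@perm_uniq _ [:: a; b; c; e]) // perm_cons.
  exact: permEl (perm_catCA [:: b] [:: c] [:: e]).
- by rewrite ae_bc fC.
- by rewrite eq_sym ab_ac ac_ae ab_ae.
Qed.

Lemma striped_K4_swap34 a b c e : striped_K4 f a b c e -> striped_K4 f a b e c.
Proof. by move=> /striped_K4_swap_pairs /striped_K4_swap12 /striped_K4_swap_pairs. Qed.

Variable lt : rel T.
Hypothesis lt_total : forall x y, x != y -> lt x y || lt y x.

Lemma striped_K4_chain a b c e : striped_K4 f a b c e ->
  exists a' b' c' e', [/\ lt a' b', lt b' c', lt c' e' & striped_K4 f a' b' c' e'].
Proof.
move=> striped; wlog ab : a b c e striped / lt a b.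
  move=> sorted; have [ab_neq _ _ _ _] := striped_K4_neq striped.
  have /orP[ab | ba] := lt_total ab_neq; first exact: sorted striped ab.
  exact: sorted (striped_K4_swap12 striped) ba.
wlog ce : a b c e striped ab / lt c e.
  move=> sorted; have [_ _ _ _ ce_neq] := striped_K4_neq striped.
  have /orP[ce | ec] := lt_total ce_neq; first exact: sorted striped ab ce.
  exact: sorted (striped_K4_swap34 striped) ab ec.
wlog ac : a b c e striped ab ce / lt a c.
  move=> sorted; have [_ ac_neq _ _ _] := striped_K4_neq striped.
  have /orP[ac | ca] := lt_total ac_neq; first exact: sorted striped ab ce ac.
  exact: sorted (striped_K4_swap_pairs striped) ce ab ca.
have [_ _ bc_neq be_neq _] := striped_K4_neq striped.
have /orP[bc | cb] := lt_total bc_neq; first by exists a, b, c, e.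
have /orP[be | eb] := lt_total be_neq.
  by exists a, c, b, e; split => //; apply: striped_K4_swap23.
by exists a, c, e, b; split => //; apply/striped_K4_swap34/striped_K4_swap23.
Qed.

End StripedK4.

Lemma lexlt_tuple_total n (x y : n.-tuple bool) : x != y -> lexlt x y || lexlt y x.
Proof. by move=> xy; apply: lexlt_total; rewrite val_eqE. Qed.

Lemma psiC p r alpha (x y : alpha.-tuple bool) : psi p r x y = psi p r y x.
Proof.
rewrite /psi; have [-> // | xy] := eqVneq x y.
have /orP[lt_xy | lt_yx] := lexlt_tuple_total xy.
- by rewrite lt_xy (negbTE (lexlt_asym lt_xy)).
- by rewrite lt_yx (negbTE (lexlt_asym lt_yx)).
Qed.

Theorem lemma2p3 (p : nat) (r : nat -> nat) (alpha : nat) :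
  0 < p ->
  1 <= r 1 ->
  (forall d, 1 <= d < p -> r d <= r d.+1) ->
  (forall d, 1 <= d < p -> r d %| r d.+1) ->
  r p <= alpha ->
  ~ (exists a b c e : alpha.-tuple bool, striped_K4 (psi p r) a b c e).
Proof.
move=> p_gt0 r1_gt0 r_mono _ rp_le_alpha [a [b [c [e striped]]]].
have r1_le d : 0 < d <= p -> r 1 <= r d.
  elim: d => // -[// | d] IH /andP[_ d_lt].
  by apply: leq_trans (IH _) (r_mono _ _); lia.
have rp_gt0 : 0 < r p by apply: leq_trans r1_gt0 (r1_le _ _); rewrite p_gt0 leqnn.
have k_gt0 : 0 < rseq p alpha r p by rewrite /rseq gtn_eqF // ltn_eqF.
have alpha_gt0 : 0 < alpha := leq_trans rp_gt0 rp_le_alpha.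
have [a' [b' [c' [e' [ab bc ce striped']]]]] :=
  striped_K4_chain (@psiC p r alpha) (@lexlt_tuple_total alpha) striped.
exact: (no_striped_K4_chain alpha_gt0 k_gt0 ab bc ce striped').
Qed.
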